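(* Let $q\in(0,1]$. Consider the linear semi-infinite problem described in the context, and let $(\bar c,\bar b)\in\mathbb{R}^n\times\mathcal{C}(T,\mathbb{R})$ with $\mathcal{S}(\bar c,\bar b)=\{\bar x\}$, and assume $P(\bar c,\bar b)$ satisfies the Slater condition. Then $$\operatorname{clm}_q\mathcal{S}((\bar c,\bar b),\bar x)\le \operatorname{clm}_q\mathcal{S}_{\bar c}(\bar b,\bar x)\le \inf_{D\in\mathcal{K}_{\bar b}(\bar x)}\ \liminf_{x\to\bar x,\ f_D(x)>0} f_D(x)^{q-1}\, d(0,\partial f_D(x)).$$
   Context: Setting: $T$ is a compact subset of a metric space $Z$ with $T\neq Z$; $t\mapsto a_t\in\mathbb{R}^n$ is continuous on $T$; $g_t(x)=\langle a_t,x\rangle$ and $f\equiv0$. $\mathcal{C}(T,\mathbb{R})$ is the space of continuous $b:T\to\mathbb{R}$, $t\mapsto b_t$, with $\|b\|_\infty=\max_t|b_t|$. For $(c,b)\in\mathbb{R}^n\times\mathcal{C}(T,\mathbb{R})$, $P(c,b)$: minimize $\langle c,x\rangle$ subject to $\langle a_t,x\rangle\le b_t$, $t\in T$. Parameter norm $\|(c,b)\|=\max\{\|c\|,\|b\|_\infty\}$ (Euclidean norm on $\mathbb{R}^n$). $\mathcal{S}(c,b)$ is the optimal solution set, $\mathcal{S}_c(b):=\mathcal{S}(c,b)$. Slater condition: there is $\hat x$ with $g_t(\hat x)<b_t$ for all $t$. Active set $T_b(x)=\{t\in T: g_t(x)=b_t\}$. For a set-valued $S:Y\rightrightarrows X$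 between metric spaces and $(\bar y,\bar x)\in\operatorname{gph}S$, the $q$-order calmness modulus is $\operatorname{clm}_q S(\bar y,\bar x):=\liminf_{y\to\bar y,\ x\to\bar x,\ x\in S(y)} d(y,\bar y)^q/d(x,S(\bar y))$. $\mathcal{K}_{\bar b}(\bar x)$ is the family of sets $D\subset T_{\bar b}(\bar x)$ with $|D|\le n$ and $-(u+\bar c)\in\operatorname{cone}\{\partial g_t(\bar x): t\in D\}$ for some $u\in\partial f(\bar x)$, where cone denotes the convex conical hull, always containing $0_n$ (so $\operatorname{cone}(\emptyset)=\{0_n\}$), and $\partial$ is the convex subdifferential. For $D\in\mathcal{K}_{\bar b}(\bar x)$, $f_D(x):=\sup\{g_t(x)-\bar b_t,\ t\in T\setminus D;\ |g_t(x)-\bar b_t|,\ t\in D\}$. $d(0,A)=\inf_{a\in A}\|a\|$. *)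

From HB Require Import structures.
From mathcomp Require Import all_boot all_order all_algebra.
From mathcomp Require Import all_classical all_reals all_analysis.
Set Implicit Arguments. Unset Strict Implicit. Unset Printing Implicit Defensive.
Import Order.TTheory GRing.Theory Num.Theory.
Import numFieldNormedType.Exports.
Local Open Scope classical_set_scope.
Local Open Scope ring_scope.

Section LSIP.
Variables (R : realType) (n : nat).

Definition ip (u v : 'rV[R]_n) : R := \sum_(i < n) u ord0 i * v ord0 i.
Definition enorm (u : 'rV[R]_n) : R := Num.sqrt (ip u u).

(* distance (in \bar R, +oo for the empty set) from a point to a set *)
Definition edist_set (x : 'rV[R]_n) (A : set 'rV[R]_n) : \bar R :=
  ereal_inf [set (enorm (x - s))%:E | s in A].

Definition dist0 (A : set 'rV[R]_n) : \bar R := edist_set 0 A.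

Definition subdiff (phi : 'rV[R]_n -> R) (x : 'rV[R]_n) : set 'rV[R]_n :=
  [set u | forall y, phi x + ip u (y - x) <= phi y].

Definition cone (A : set 'rV[R]_n) : set 'rV[R]_n :=
  [set v | exists (k : nat) (lam : 'I_k -> R) (w : 'I_k -> 'rV[R]_n),
     (forall i, 0 <= lam i) /\ (forall i, A (w i)) /\ v = \sum_(i < k) lam i *: w i].

Variable Z : pseudoMetricType R.

Definition supnorm (T : set Z) (b : Z -> R) : R := sup [set `|b t| | t in T].

(* feasible set and optimal set of P(c,b): min <c,x> s.t. <a_t,x> <= b_t, t in T *)
Definition feasible (T : set Z) (a : Z -> 'rV[R]_n) (b : Z -> R) : set 'rV[R]_n :=
  [set x | forall t, T t -> ip (a t) x <= b t].
Definition Sol (T : set Z) (a : Z -> 'rV[R]_n) (c : 'rV[R]_n) (b : Z -> R)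
  : set 'rV[R]_n :=
  [set x | feasible T a b x /\ forall y, feasible T a b y -> ip c x <= ip c y].

Definition active (T : set Z) (a : Z -> 'rV[R]_n) (b : Z -> R) (x : 'rV[R]_n)
  : set Z := [set t | T t /\ ip (a t) x = b t].

End LSIP.

(* Quotient num / den in \bar R, with the convention num/0 = +oo
   (in particular 0/0 = +oo) and num/(+oo) = 0. *)
Definition equot (R : realType) (num : R) (den : \bar R) : \bar R :=
  match den with
  | r%:E => if r == 0 then +oo%E else (num / r)%:E
  | +oo%E => 0%E
  | -oo%E => +oo%E
  end.

(* q-order calmness modulus of S : Y ⇉ R^n at (ybar, xbar), where the
   parameter space is the subset Ydom of Y with distance dY:
   liminf_{y -> ybar, x -> xbar, x in S y} dY(y,ybar)^q / d(x, S ybar). *)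
Definition clm (R : realType) (n : nat) (Y : Type) (Ydom : set Y)
  (dY : Y -> Y -> R) (S : Y -> set 'rV[R]_n) (q : R) (ybar : Y) (xbar : 'rV[R]_n)
  : \bar R :=
  ereal_sup [set ereal_inf
     ((fun yx : Y * 'rV[R]_n =>
         equot (powR (dY yx.1 ybar) q) (edist_set yx.2 (S ybar))) @`
      [set yx : Y * 'rV[R]_n | Ydom yx.1 /\ S yx.1 yx.2 /\
             dY yx.1 ybar < delta /\ enorm (yx.2 - xbar) < delta])
     | delta in [set d : R | 0 < d]].

(* Data of the statement specialised to the LSIP with f = 0, g_t = <a_t, .> *)
Section Kfam.
Variables (R : realType) (n : nat) (Z : pseudoMetricType R).
Variables (T : set Z) (a : Z -> 'rV[R]_n) (cbar : 'rV[R]_n) (bbar : Z -> R)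
          (xbar : 'rV[R]_n).

Definition fzero : 'rV[R]_n -> R := fun _ => 0.
Definition gcon (t : Z) : 'rV[R]_n -> R := fun x => ip (a t) x.

Definition Kfam : set (set Z) :=
  [set D : set Z | (D `<=` active T a bbar xbar)%classic /\
     (exists s : seq Z, D = [set` s] /\ (size s <= n)%N) /\
     exists u, subdiff fzero xbar u /\
       cone (\bigcup_(t in D) subdiff (gcon t) xbar) (- (u + cbar))].

Definition fD (D : set Z) (x : 'rV[R]_n) : R :=
  sup ([set gcon t x - bbar t | t in T `\` D] `|` [set `|gcon t x - bbar t| | t in D]).

Definition rhs_term (q : R) (D : set Z) : \bar R :=
  ereal_sup [set ereal_inf
     ((fun x => ((powR (fD D x) (q - 1))%:E * dist0 (subdiff (fD D) x))%E) @`
      [set x | 0 < fD D x /\ enorm (x - xbar) < delta])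
     | delta in [set d : R | 0 < d]].

Definition rhs (q : R) : \bar R := ereal_inf [set rhs_term q D | D in Kfam].
End Kfam.

From HB Require Import structures.
From mathcomp Require Import all_boot all_order all_algebra.
From mathcomp Require Import all_classical all_reals all_analysis.
From mathcomp Require Import ring lra.
Import Order.TTheory GRing.Theory Num.Theory.
Import numFieldNormedType.Exports.
Local Open Scope classical_set_scope.
Local Open Scope ring_scope.

(* The first inequality holds because fixing c only shrinks the set of
   perturbations over which the liminf is taken.  For the second, fix D in
   K(xbar); as f = 0, the condition defining K says -cbar = sum_i lam_i a_(t_i)
   with lam_i >= 0 and t_i in D.  Given x near xbar with eps := f_D(x) > 0, the
   right-hand side b_t := max(<a_t, x>, bbar_t - eps) is continuous, lies within
   eps of bbar, and makes x feasible with every t in D active, so x is optimal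
   for P(cbar, b) by the KKT sufficient condition.  Since S(bbar) = {xbar}, the
   calmness quotient at (b, x) is at most eps^q / |x - xbar|, and a subgradient
   z of f_D at x satisfies eps <= |z| |x - xbar| because f_D(xbar) <= 0; hence
   the quotient is at most eps^(q-1) |z|.  Closeness of b to bbar comes from the
   Lipschitz bound f_D(x) <= K |x - xbar|. *)

Section InnerProduct.
Context {R : realType} {n : nat}.
Implicit Types (u v w y z : 'rV[R]_n).

Lemma ipC u v : ip u v = ip v u.
Proof. by apply: eq_bigr => i _; rewrite mulrC. Qed.

Lemma ipDl u v w : ip (u + v) w = ip u w + ip v w.
Proof. by rewrite /ip -big_split; apply: eq_bigr => i _; rewrite mxE mulrDl. Qed.

Lemma ipNl u w : ip (- u) w = - ip u w.
Proof. by rewrite /ip -sumrN; apply: eq_bigr => i _; rewrite mxE mulNr. Qed.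

Lemma ipBl u v w : ip (u - v) w = ip u w - ip v w.
Proof. by rewrite ipDl ipNl. Qed.

Lemma ipDr u v w : ip w (u + v) = ip w u + ip w v.
Proof. by rewrite ipC ipDl !(ipC w). Qed.

Lemma ipNr u w : ip w (- u) = - ip w u.
Proof. by rewrite ipC ipNl ipC. Qed.

Lemma ipBr u v w : ip w (u - v) = ip w u - ip w v.
Proof. by rewrite ipDr ipNr. Qed.

Lemma ipZl (l : R) u w : ip (l *: u) w = l * ip u w.
Proof. by rewrite /ip mulr_sumr; apply: eq_bigr => i _; rewrite mxE mulrA. Qed.

Lemma ip0l w : ip 0 w = 0.
Proof. by rewrite /ip big1 // => i _; rewrite mxE mul0r. Qed.

Lemma ip_suml k (lam : 'I_k -> R) (W : 'I_k -> 'rV[R]_n) z :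
  ip (\sum_(i < k) lam i *: W i) z = \sum_(i < k) lam i * ip (W i) z.
Proof.
elim: k lam W => [|k IH] lam W; first by rewrite !big_ord0 ip0l.
by rewrite !big_ord_recr /= ipDl ipZl IH.
Qed.

Lemma ip_ge0 v : 0 <= ip v v.
Proof. by apply: sumr_ge0 => i _; rewrite -expr2 sqr_ge0. Qed.

Lemma ip_le0_eq0 v : ip v v <= 0 -> v = 0.
Proof.
move=> vv_le0; have vv0 : ip v v = 0 by apply/eqP; rewrite eq_le vv_le0 ip_ge0.
apply/matrixP => i j; rewrite (ord1 i) mxE.
have sq_ge0 (k : 'I_n) : true -> 0 <= v ord0 k * v ord0 k.
  by rewrite -expr2 sqr_ge0.
by have /eqP := @psumr_eq0P _ _ _ _ sq_ge0 vv0 j isT; rewrite mulf_eq0 orbb => /eqP.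
Qed.

Lemma ip_le_eq w v : (forall y, ip w y <= ip v y) -> w = v.
Proof.
move=> wv; apply/eqP; rewrite -subr_eq0; apply/eqP/ip_le0_eq0.
by rewrite ipBl subr_le0.
Qed.

Lemma enorm_ge0 v : 0 <= enorm v.
Proof. exact: sqrtr_ge0. Qed.

Lemma enorm_sq v : enorm v ^+ 2 = ip v v.
Proof. by rewrite sqr_sqrtr // ip_ge0. Qed.

Lemma enorm_eq0 v : enorm v = 0 -> v = 0.
Proof. by move=> v0; apply: ip_le0_eq0; rewrite -enorm_sq v0 expr0n. Qed.

Lemma enorm0 : enorm (0 : 'rV[R]_n) = 0.
Proof. by rewrite /enorm ip0l sqrtr0. Qed.

Lemma enormN v : enorm (- v) = enorm v.
Proof. by rewrite /enorm ipNl ipNr opprK. Qed.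

Lemma ip_le_enorm u v : ip u v <= enorm u * enorm v.
Proof.
have [/enorm_eq0 ->|nu_neq0] := eqVneq (enorm u) 0.
  by rewrite ip0l enorm0 mul0r.
have [/enorm_eq0 ->|nv_neq0] := eqVneq (enorm v) 0.
  by rewrite ipC ip0l enorm0 mulr0.
set nu := enorm u in nu_neq0 *; set nv := enorm v in nv_neq0 *.
have nu_gt0 : 0 < nu by rewrite lt_neqAle eq_sym nu_neq0 enorm_ge0.
have nv_gt0 : 0 < nv by rewrite lt_neqAle eq_sym nv_neq0 enorm_ge0.
have : 0 <= nv ^+ 2 * ip u u - 2 * nv * nu * ip u v + nu ^+ 2 * ip v v.
  have -> : nv ^+ 2 * ip u u - 2 * nv * nu * ip u v + nu ^+ 2 * ip v v
      = \sum_(i < n) (nv * u ord0 i - nu * v ord0 i) ^+ 2.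
    rewrite /ip !mulr_sumr -sumrN -!big_split /=.
    by apply: eq_bigr => i _; ring.
  by apply: sumr_ge0 => i _; rewrite sqr_ge0.
rewrite -!enorm_sq -/nu -/nv => sq_ge0.
have : (2 * nv * nu) * ip u v <= (2 * nv * nu) * (nu * nv) by nra.
by rewrite ler_pM2l ?mulr_gt0.
Qed.

Lemma norm_coord_le_enorm v i : `|v ord0 i| <= enorm v.
Proof.
rewrite -sqrtr_sqr /enorm ler_sqrt ?ip_ge0 // /ip (bigD1 i) //= expr2 lerDl.
by apply: sumr_ge0 => j _; rewrite -expr2 sqr_ge0.
Qed.

Lemma ip_continuousl y : continuous (fun v : 'rV[R]_n => ip v y).
Proof.
apply: continuous_big => [|i _ v]; first exact: add_continuous.
apply: (@continuous_comp _ _ _ (fun v : 'rV[R]_n => v ord0 i) (fun r => r * y ord0 i)).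
  exact: coord_continuous.
by apply: continuousM; [exact: cvg_id | exact: cvg_cst].
Qed.

Lemma subdiff_cst (c : R) z w : subdiff (fun=> c) z w -> w = 0.
Proof.
by move=> hw; apply: ip_le_eq => y; have := hw (y + z); rewrite addrK ip0l; lra.
Qed.

Lemma subdiff_ip v z w : subdiff (fun x => ip v x) z w -> w = v.
Proof.
by move=> hw; apply: ip_le_eq => y; have := hw (y + z); rewrite addrK ipDr; lra.
Qed.

Lemma subdiff_gap (phi : 'rV[R]_n -> R) (x0 x : 'rV[R]_n) z :
  phi x0 <= 0 -> subdiff phi x z -> phi x <= enorm z * enorm (x - x0).
Proof.
move=> phi_x0 hz; have := hz x0; rewrite -opprB ipNr.
by have := ip_le_enorm z (x - x0); lra.
Qed.

Lemma edist_set1 (x x0 : 'rV[R]_n) : edist_set x [set x0] = (enorm (x - x0))%:E.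
Proof. by rewrite /edist_set image_set1 ereal_inf1. Qed.

Lemma calm_quotient_le (q s eps e : R) (A : set 'rV[R]_n) :
  0 <= q -> 0 < eps -> 0 < e -> 0 <= s <= eps ->
  (forall z, A z -> eps <= enorm z * e) ->
  (equot (powR s q) e%:E <= (powR eps (q - 1))%:E * dist0 A)%E.
Proof.
move=> q_ge0 eps_gt0 e_gt0 /andP[s_ge0 s_le] A_gap; rewrite /equot gt_eqF //.
have powR_split : powR eps q = powR eps (q - 1) * eps.
  rewrite -{3}(powRr1 (ltW eps_gt0)) -powRD ?subrK //.
  by rewrite (gt_eqF eps_gt0) implybT.
apply: (@le_trans _ _ ((powR eps (q - 1))%:E * (eps / e)%:E)%E).
  rewrite -EFinM lee_fin mulrA -powR_split ler_wpM2r ?invr_ge0 ?(ltW e_gt0) //.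
  by apply: ge0_ler_powR; rewrite ?nnegrE ?(ltW eps_gt0).
apply: lee_wpmul2l; first by rewrite lee_fin powR_ge0.
apply: le_ereal_inf_tmp => _ [z Az <-].
by rewrite lee_fin sub0r enormN ler_pdivrMr //; exact: A_gap.
Qed.

End InnerProduct.

Lemma ereal_sup_inf_le {R : realType} {A B : Type} (F : R -> set A)
    (G : R -> set B) (f : A -> \bar R) (g : B -> \bar R) :
  (forall d, 0 < d -> exists2 d', 0 < d' &
     forall y, G d' y -> exists2 x, F d x & (f x <= g y)%E) ->
  (ereal_sup [set ereal_inf (f @` F d) | d in [set d : R | (0 < d)%R]]
   <= ereal_sup [set ereal_inf (g @` G d) | d in [set d : R | (0 < d)%R]])%E.
Proof.
move=> FG; apply: ge_ereal_sup => _ [d d_gt0 <-].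
have [d' d'_gt0 FGd] := FG d d_gt0.
apply: (@le_trans _ _ (ereal_inf (g @` G d'))); last first.
  by apply: ereal_sup_ubound; exists d'.
apply: le_ereal_inf_tmp => _ [y Gy <-]; have [x Fx fg] := FGd y Gy.
by apply: le_trans fg; apply: ereal_inf_lbound; exists x.
Qed.

Lemma clm_prod_le {R : realType} {n : nat} {Y1 Y2 : Type} (dom : set Y2)
    (d1 : Y1 -> Y1 -> R) (d2 : Y2 -> Y2 -> R) (S : Y1 * Y2 -> set 'rV[R]_n)
    (q : R) (y1 : Y1) (y2 : Y2) (xbar : 'rV[R]_n) :
  d1 y1 y1 = 0 -> (forall y, 0 <= d2 y y2) ->
  (clm (fun y => dom y.2) (fun y y' => Num.max (d1 y.1 y'.1) (d2 y.2 y'.2))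
     S q (y1, y2) xbar
   <= clm dom d2 (fun y => S (y1, y)) q y2 xbar)%E.
Proof.
move=> d11 d2_ge0; apply: ereal_sup_inf_le => d d_gt0.
exists d => // -[y x] /=; rewrite -(max_r (d2_ge0 y)) -d11 => near.
by exists ((y1, y), x).
Qed.

Lemma sup_le_ubound_ge0 {R : realType} (E : set R) (L : R) :
  0 <= L -> (forall e, E e -> e <= L) -> sup E <= L.
Proof.
move=> L_ge0 EL; have [E_ne|E0] := pselect (E !=set0); first exact: ge_sup.
rewrite (_ : E = set0) ?sup0 //.
by apply/seteqP; split=> // e Ee; apply: E0; exists e.
Qed.

Lemma supnorm_ge0 {R : realType} {Z : pseudoMetricType R} (T : set Z) (b : Z -> R) :
  0 <= supnorm T b.
Proof.
rewrite /supnorm.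
have [[[_ [t Tt _]] ub]|no_sup] := pselect (has_sup [set `|b t| | t in T]).
  by apply: le_trans (normr_ge0 (b t)) _; apply: ub_le_sup => //; exists t.
by rewrite sup_out.
Qed.

Section LinearSemiInfiniteProgram.
Context {R : realType} {n : nat} {Z : pseudoMetricType R}.
Variables (T : set Z) (a : Z -> 'rV[R]_n).

Lemma ip_within_continuous y :
  {within T, continuous a} -> {within T, continuous (fun t => ip (a t) y)}.
Proof.
move=> ca; apply: (@within_continuous_comp _ _ _ T a (fun v => ip v y)) => // v _.
exact: ip_continuousl.
Qed.

Lemma ip_bounded : compact T -> {within T, continuous a} ->
  exists2 K, 0 <= K & forall t v, T t -> `|ip (a t) v| <= K * enorm v.
Proof.
move=> cT ca.
have /choice [M M_ub] : forall i : 'I_n, exists M, forall t, T t -> `|a t ord0 i| <= M.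
  move=> i; have cai : {within T, continuous (fun t => a t ord0 i)}.
    apply: (@within_continuous_comp _ _ _ T a (fun v : 'rV[R]_n => v ord0 i)) => // v _.
    exact: coord_continuous.
  have [M0 [_ M0_ub]] := compact_bounded (continuous_compact cai cT).
  by exists (M0 + 1) => t Tt; apply: M0_ub; [rewrite ltrDl | exists t].
exists (\sum_(i < n) `|M i|) => [|t v Tt]; first exact: sumr_ge0.
rewrite /ip mulr_suml; apply: le_trans (ler_norm_sum _ _ _) _.
apply: ler_sum => i _; rewrite normrM ler_pM ?norm_coord_le_enorm //.
exact: le_trans (M_ub i t Tt) (ler_norm _).
Qed.

Lemma Sol_of_multipliers {c b x k} {lam : 'I_k -> R} {t : 'I_k -> Z} :
  feasible T a b x -> (forall i, 0 <= lam i) ->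
  (forall i, active T a b x (t i)) -> - c = \sum_(i < k) lam i *: a (t i) ->
  Sol T a c b x.
Proof.
move=> Fx lam_ge0 t_active c_cone; split=> // y Fy.
rewrite -subr_ge0 -ipBr -[c]opprK c_cone ipNl ip_suml oppr_ge0.
apply: sumr_le0 => i _; apply: mulr_ge0_le0 (lam_ge0 i) _.
by have [Tt xt] := t_active i; rewrite ipBr subr_le0 xt; exact: Fy.
Qed.

Lemma Kfam_multipliers {cbar bbar xbar D} : Kfam T a cbar bbar xbar D ->
  exists k (lam : 'I_k -> R) (t : 'I_k -> Z),
    [/\ forall i, 0 <= lam i, forall i, D (t i)
      & - cbar = \sum_(i < k) lam i *: a (t i)].
Proof.
case=> _ [_ [u [/subdiff_cst -> [k [lam [w [lam_ge0 [wD c_cone]]]]]]]].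
have /choice [t Ht] : forall i, exists t, D t /\ w i = a t.
  by move=> i; have [t Dt /subdiff_ip wi] := wD i; exists t.
exists k, lam, t; split=> [//|i|]; first exact: (Ht i).1.
by rewrite -[cbar]add0r c_cone; apply: eq_bigr => i _; rewrite (Ht i).2.
Qed.

Definition perturbed_rhs (b : Z -> R) (x : 'rV[R]_n) (eps : R) : Z -> R :=
  fun t => Num.max (ip (a t) x) (b t - eps).

Lemma perturbed_rhs_continuous b x eps :
  {within T, continuous a} -> {within T, continuous b} ->
  {within T, continuous (perturbed_rhs b x eps)}.
Proof.
move=> ca cb t.
apply: (@continuous_max R (subspace T) (fun t => ip (a t) x) (fun t => b t - eps)).
  exact: ip_within_continuous.
by apply: continuousB; [exact: cb | exact: cvg_cst].
Qed.

Lemma feasible_perturbed_rhs b x eps : feasible T a (perturbed_rhs b x eps) x.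
Proof. by move=> t _; rewrite /perturbed_rhs le_max lexx. Qed.

Lemma supnorm_perturbed_rhs_le b x eps : 0 <= eps ->
  (forall t, T t -> ip (a t) x - b t <= eps) ->
  supnorm T (perturbed_rhs b x eps - b) <= eps.
Proof.
move=> eps_ge0 x_eps; apply: sup_le_ubound_ge0 => // _ [t Tt <-].
have lo : b t - eps <= perturbed_rhs b x eps t by rewrite le_max lexx orbT.
have hi : perturbed_rhs b x eps t <= b t + eps.
  by rewrite ge_max; apply/andP; split; [have := x_eps t Tt; lra | lra].
by rewrite !fctE ler_norml; apply/andP; split; lra.
Qed.

Lemma active_perturbed_rhs b x eps t : T t -> - eps <= ip (a t) x - b t ->
  active T a (perturbed_rhs b x eps) x t.
Proof. by move=> Tt near_active; split=> //; rewrite /perturbed_rhs max_l //; lra. Qed.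

Section ResidualFunction.
Context {bbar : Z -> R} {xbar : 'rV[R]_n} {D : set Z} {K : R}.
Hypotheses (xbar_feasible : feasible T a bbar xbar)
  (D_active : D `<=` active T a bbar xbar) (K_ge0 : 0 <= K)
  (ip_le : forall t v, T t -> `|ip (a t) v| <= K * enorm v).

Local Notation residuals y :=
  ([set gcon a t y - bbar t | t in T `\` D] `|` [set `|gcon a t y - bbar t| | t in D]).

Lemma residual_le y e : residuals y e -> e <= K * enorm (y - xbar).
Proof.
have ip_sub_le t : T t -> ip (a t) y - bbar t <= K * enorm (y - xbar).
  move=> Tt; have := ip_le t (y - xbar) Tt; have := xbar_feasible t Tt.
  by rewrite ipBr ler_norml => ? /andP[_ ?]; lra.
case=> [[t [Tt _] <-]|[t Dt <-]]; first exact: ip_sub_le.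
have [Tt xbar_t] := D_active t Dt; have := ip_le t (y - xbar) Tt.
by rewrite ipBr xbar_t.
Qed.

Lemma fD_le_dist y : fD T a bbar D y <= K * enorm (y - xbar).
Proof.
apply: sup_le_ubound_ge0 => [|e]; first by rewrite mulr_ge0 ?enorm_ge0.
exact: residual_le.
Qed.

Lemma residual_le_fD y e : residuals y e -> e <= fD T a bbar D y.
Proof. by apply: ub_le_sup; exists (K * enorm (y - xbar)) => e'; exact: residual_le. Qed.

Lemma ip_sub_le_fD y t : T t -> ip (a t) y - bbar t <= fD T a bbar D y.
Proof.
move=> Tt; have [Dt|nDt] := pselect (D t).
  by apply: le_trans (ler_norm _) _; apply: residual_le_fD; right; exists t.
by apply: residual_le_fD; left; exists t.
Qed.

Lemma Sol_perturbed_rhs cbar x k (lam : 'I_k -> R) (t : 'I_k -> Z) :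
  (forall i, 0 <= lam i) -> (forall i, D (t i)) ->
  - cbar = \sum_(i < k) lam i *: a (t i) ->
  Sol T a cbar (perturbed_rhs bbar x (fD T a bbar D x)) x.
Proof.
move=> lam_ge0 tD c_cone.
apply: Sol_of_multipliers lam_ge0 _ c_cone; first exact: feasible_perturbed_rhs.
move=> i; apply: active_perturbed_rhs; first exact: (D_active _ (tD i)).1.
have : `|ip (a (t i)) x - bbar (t i)| <= fD T a bbar D x.
  by apply: residual_le_fD; right; exists (t i).
by rewrite ler_norml => /andP[].
Qed.

End ResidualFunction.

Lemma clm_le_rhs_term (q : R) cbar (bbar : Z -> R) xbar D :
  compact T -> {within T, continuous a} -> {within T, continuous bbar} ->
  0 <= q -> Sol T a cbar bbar = [set xbar] -> Kfam T a cbar bbar xbar D ->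
  (clm (fun b : Z -> R => {within T, continuous b})
       (fun b b' => supnorm T (b - b')%R) (fun b => Sol T a cbar b) q bbar xbar
   <= rhs_term T a bbar xbar q D)%E.
Proof.
move=> cT ca cb q_ge0 Sol1 KD.
have [xbar_feasible _] : Sol T a cbar bbar xbar by rewrite Sol1.
have [k [lam [t [lam_ge0 tD c_cone]]]] := Kfam_multipliers KD.
have [K K_ge0 ip_le] := ip_bounded cT ca.
have fD_le := fD_le_dist xbar_feasible KD.1 K_ge0 ip_le.
have ip_sub_le := ip_sub_le_fD xbar_feasible KD.1 ip_le.
have x_opt := Sol_perturbed_rhs xbar_feasible KD.1 ip_le.
apply: ereal_sup_inf_le => d d_gt0.
have K1_gt0 : 0 < K + 1 by lra.
exists (Num.min d (d / (K + 1))) => [|x [fD_gt0]]; first by rewrite lt_min d_gt0 divr_gt0.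
rewrite lt_min => /andP[x_near_d x_near_dK]; set eps := fD T a bbar D x in fD_gt0 *.
have eps_le : eps <= K * enorm (x - xbar) := fD_le x.
have Kx_lt : K * enorm (x - xbar) < d.
  by move: x_near_dK; rewrite ltr_pdivlMr //; have := enorm_ge0 (x - xbar); nra.
have b_near : supnorm T (perturbed_rhs bbar x eps - bbar) <= eps.
  by apply: supnorm_perturbed_rhs_le => [|s]; [exact: ltW | exact: ip_sub_le].
exists (perturbed_rhs bbar x eps, x) => /=.
  split; first exact: perturbed_rhs_continuous.
  split; first exact: x_opt tD c_cone.
  by split=> //; lra.
have e_gt0 : 0 < enorm (x - xbar).
  rewrite lt_neqAle enorm_ge0 andbT eq_sym; apply/eqP => e0.
  by move: eps_le; rewrite e0 mulr0; lra.
rewrite Sol1 edist_set1 calm_quotient_le ?supnorm_ge0 ?b_near //.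
move=> z; apply: subdiff_gap.
by have := fD_le xbar; rewrite subrr enorm0 mulr0.
Qed.

End LinearSemiInfiniteProgram.

Theorem corollary4p12 (R : realType) (n : nat) (Z : pseudoMetricType R)
  (T : set Z) (a : Z -> 'rV[R]_n) (q : R) (cbar : 'rV[R]_n) (bbar : Z -> R)
  (xbar : 'rV[R]_n) :
  hausdorff_space Z ->
  compact T -> T != setT ->
  {within T, continuous a} ->
  0 < q <= 1 ->
  {within T, continuous bbar} ->
  Sol T a cbar bbar = [set xbar] ->
  (exists xh : 'rV[R]_n, forall t, T t -> ip (a t) xh < bbar t) ->
  let clmS :=
    clm (fun y : 'rV[R]_n * (Z -> R) => {within T, continuous y.2})
        (fun y y' => Num.max (enorm (y.1 - y'.1)) (supnorm T (y.2 - y'.2)))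
        (fun y => Sol T a y.1 y.2) q (cbar, bbar) xbar in
  let clmSc :=
    clm (fun b : Z -> R => {within T, continuous b})
        (fun b b' => supnorm T (b - b'))
        (fun b => Sol T a cbar b) q bbar xbar in
  (clmS <= clmSc)%E /\ (clmSc <= rhs T a cbar bbar xbar q)%E.
Proof.
move=> _ cT _ ca /andP[q_gt0 _] cb Sol1 _ clmS clmSc; split.
  apply: (@clm_prod_le _ _ _ _ (fun b : Z -> R => {within T, continuous b})
            (fun c c' => enorm (c - c'))) => [|b]; last exact: supnorm_ge0.
  by rewrite subrr enorm0.
apply: le_ereal_inf_tmp => _ [D KD <-].
exact: clm_le_rhs_term (ltW q_gt0) Sol1 KD.
Qed.
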